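(* There exists a constant $C'>0$ such that $|\varrho_N(x)|<1/x^2$ for all sufficiently large positive integers $N$ and all $x\in\left[N,\exp\!\left(C'(\log N)^2\right)\right]$.
   Context: For a positive integer $N$ and real $x$, $\varrho_N(x):=\prod_{n=1}^N\cos(\pi x/n)$. *)

From Stdlib Require Import Reals.
Open Scope R_scope.

Fixpoint prod_1_to (N : nat) (f : nat -> R) : R :=
  match N with
  | O => 1
  | S k => prod_1_to k f * f (S k)
  end.

Definition varrho (N : nat) (x : R) : R :=
  prod_1_to N (fun n => cos (PI * x / INR n)).

(* The k-th forward difference of n |-> x/n is (-1)^k k! x / (n (n+1) ... (n+k)).
   We choose k >= 1 and m >= sqrt(N/2) - k so that k! x / (n ... (n+k)) lies in (1/4, 3/4]
   for every n with m < n <= m + m/(k+1).  If x/n, ..., x/(n+k) were all within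
   d = 2^-k / 8 of integers, the difference would be within 2^k d = 1/8 of an integer,
   which is impossible; so every block of k+1 consecutive integers of that window contains
   an n with |cos(pi x/n)| <= cos(pi d) <= 1 - d^2.  The window holds about m/(k+1)^2
   disjoint blocks, whence |varrho_N(x)| <= exp(-m d^2/(k+1)^2).  With s = sqrt(N/2), the
   constraint log x <= (log s)^2/64 forces k <= 1 + (log s)/64, so 4^k <= 9 s^(1/32), and
   the bound beats 1/x^2 once log s is large. *)

From Stdlib Require Import Reals Lra Lia Classical ZArith.
Open Scope R_scope.

Lemma discrete_ivt (Q : nat -> Prop) (a b : nat) : (a <= b)%nat -> ~ Q a -> Q b ->
  exists n, (a <= n < b)%nat /\ ~ Q n /\ Q (S n).
Proof.
  intros Hab Ha Hb. induction Hab as [|b Hab IH]; [contradiction|].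
  destruct (classic (Q b)) as [Hq|Hq].
  - destruct (IH Hq) as [n [Hn HQ]]. exists n. split; [lia | exact HQ].
  - exists b. split; [lia | auto].
Qed.

Lemma exists_nat_between (y : R) : 0 <= y -> exists n : nat, y < INR n <= y + 1.
Proof.
  intros Hy. destruct (archimed y) as [Hup1 Hup2].
  assert (Hz : (0 <= up y)%Z) by (apply le_IZR; lra).
  exists (Z.to_nat (up y)). rewrite INR_IZR_INZ, Z2Nat.id by exact Hz. lra.
Qed.

Lemma INR_lt_div_succ (m q : nat) : (0 < q)%nat -> INR m < INR q * (INR (m / q) + 1).
Proof.
  intros Hq. rewrite <- S_INR, <- mult_INR. apply lt_INR.
  pose proof (Nat.div_mod m q ltac:(lia)). pose proof (Nat.mod_upper_bound m q ltac:(lia)). nia.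
Qed.

Lemma exp_le_mono (a b : R) : a <= b -> exp a <= exp b.
Proof. intros [H|H]; [left; apply exp_increasing, H | right; rewrite H; reflexivity]. Qed.

Lemma ln_le_mono (a b : R) : 0 < a -> a <= b -> ln a <= ln b.
Proof. intros Ha [H|H]; [left; apply ln_increasing; lra | right; rewrite H; reflexivity]. Qed.

Lemma exp_pow (a : R) (n : nat) : exp a ^ n = exp (INR n * a).
Proof.
  induction n as [|n IH]; [simpl; rewrite Rmult_0_l, exp_0; ring|].
  rewrite S_INR. simpl pow. rewrite IH, <- exp_plus. f_equal. ring.
Qed.

Lemma pow_le_one (c : R) (n : nat) : 0 <= c <= 1 -> c ^ n <= 1.
Proof.
  intros Hc. induction n as [|n IH]; simpl; [lra|].
  pose proof (pow_le c n (proj1 Hc)). nra.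
Qed.

Lemma pow_le_pow_of_le_one (c : R) (a b : nat) : 0 <= c <= 1 -> (a <= b)%nat -> c ^ b <= c ^ a.
Proof.
  intros Hc Hab. replace b with (a + (b - a))%nat by lia. rewrite pow_add.
  pose proof (pow_le c a (proj1 Hc)). pose proof (pow_le c (b - a) (proj1 Hc)).
  pose proof (pow_le_one c (b - a) Hc). nra.
Qed.

Lemma fact_le_pow (k : nat) : (fact k <= k ^ k)%nat.
Proof.
  induction k as [|k IH]; simpl; [lia|].
  assert (k ^ k <= S k ^ k)%nat by (apply Nat.pow_le_mono_l; lia). nia.
Qed.

Lemma pow_add_le_3 (m t : R) (n : nat) :
  0 < m -> 0 <= t -> t * INR n <= m -> (m + t) ^ n <= 3 * m ^ n.
Proof.
  intros Hm Ht Htn.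
  assert (Hu : 0 <= t / m)
    by (unfold Rdiv; apply Rmult_le_pos; [lra | left; apply Rinv_0_lt_compat; lra]).
  assert (Hun : INR n * (t / m) <= 1).
  { unfold Rdiv. rewrite <- Rmult_assoc, (Rmult_comm (INR n)).
    apply (Rmult_le_reg_r m); [lra|]. rewrite Rmult_assoc, Rinv_l; lra. }
  assert (Hgrow : (1 + t / m) ^ n <= 3).
  { apply Rle_trans with (exp (t / m) ^ n).
    - apply pow_incr. split; [lra | apply exp_ineq1_le].
    - rewrite exp_pow. apply Rle_trans with (exp 1); [apply exp_le_mono, Hun | apply exp_le_3]. }
  replace (m + t) with (m * (1 + t / m)) by (field; lra).
  rewrite Rpow_mult_distr. pose proof (pow_le m n (Rlt_le _ _ Hm)). nra.
Qed.

Fixpoint count_small (f : nat -> R) (c : R) (N : nat) : nat :=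
  match N with
  | O => O
  | S k => (count_small f c k + if Rle_dec (Rabs (f (S k))) c then 1 else 0)%nat
  end.

Lemma Rabs_prod_1_to_le (f : nat -> R) (c : R) (N : nat) :
  0 <= c <= 1 -> (forall n, Rabs (f n) <= 1) ->
  Rabs (prod_1_to N f) <= c ^ count_small f c N.
Proof.
  intros Hc Hf. induction N as [|N IH]; simpl; [rewrite Rabs_R1; lra|].
  rewrite Rabs_mult. destruct (Rle_dec (Rabs (f (S N))) c) as [Hs|Hs].
  - rewrite Nat.add_1_r. simpl. rewrite Rmult_comm.
    apply Rmult_le_compat; auto using Rabs_pos.
  - rewrite Nat.add_0_r, <- (Rmult_1_r (c ^ _)).
    apply Rmult_le_compat; auto using Rabs_pos.
Qed.

Lemma count_small_mono (f : nat -> R) (c : R) (a b : nat) :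
  (a <= b)%nat -> (count_small f c a <= count_small f c b)%nat.
Proof. induction 1; simpl; lia. Qed.

Lemma count_small_lt (f : nat -> R) (c : R) (a n b : nat) :
  (a < n <= b)%nat -> Rabs (f n) <= c -> (count_small f c a < count_small f c b)%nat.
Proof.
  intros [Han Hnb] Hn. destruct n as [|n]; [lia|].
  pose proof (count_small_mono f c a n ltac:(lia)).
  pose proof (count_small_mono f c (S n) b Hnb).
  assert (count_small f c n < count_small f c (S n))%nat.
  { simpl. destruct (Rle_dec (Rabs (f (S n))) c); [lia | contradiction]. }
  lia.
Qed.

Lemma count_small_blocks (f : nat -> R) (c : R) (base L J : nat) :
  (forall j, (j < J)%nat -> exists i, (i < L)%nat /\ Rabs (f (base + j * L + 1 + i)%nat) <= c) ->
  (J <= count_small f c (base + J * L))%nat.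
Proof.
  induction J as [|J IH]; intros Hblk; [lia|].
  pose proof (IH (fun j Hj => Hblk j ltac:(lia))).
  destruct (Hblk J ltac:(lia)) as [i [Hi Hc]].
  pose proof (count_small_lt f c (base + J * L) (base + J * L + 1 + i) (base + S J * L)
    ltac:(simpl; lia) Hc).
  lia.
Qed.

Definition near_int (y d : R) : Prop := exists z : Z, Rabs (y - IZR z) <= d.

Lemma Rabs_cos_add_INR_PI (a : R) (n : nat) : Rabs (cos (a + INR n * PI)) = Rabs (cos a).
Proof.
  induction n as [|n IH]; [simpl; rewrite Rmult_0_l, Rplus_0_r; reflexivity|].
  rewrite S_INR, Rmult_plus_distr_r, Rmult_1_l, <- Rplus_assoc, neg_cos, Rabs_Ropp.
  exact IH.
Qed.

Lemma Rabs_cos_add_IZR_PI (a : R) (z : Z) : Rabs (cos (a + IZR z * PI)) = Rabs (cos a).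
Proof.
  destruct (Z_le_gt_dec 0 z) as [Hz|Hz].
  - rewrite <- (Z2Nat.id z), <- INR_IZR_INZ by exact Hz. apply Rabs_cos_add_INR_PI.
  - replace z with (- Z.of_nat (Z.to_nat (- z)))%Z by lia.
    rewrite opp_IZR, <- INR_IZR_INZ.
    rewrite <- (Rabs_cos_add_INR_PI (a + - INR (Z.to_nat (- z)) * PI) (Z.to_nat (- z))).
    f_equal. f_equal. ring.
Qed.

Lemma Rabs_cos_PI_le_of_not_near (y d : R) :
  0 < d <= 1/2 -> ~ near_int y d -> Rabs (cos (PI * y)) <= cos (PI * d).
Proof.
  intros Hd Hfar. pose proof PI_RGT_0 as Hpi.
  destruct (archimed (y - 1/2)) as [Hup1 Hup2].
  set (r := y - IZR (up (y - 1/2))).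
  assert (Hr : d < Rabs r)
    by (apply Rnot_le_lt; intro H; apply Hfar; exists (up (y - 1/2)); exact H).
  assert (Hr2 : Rabs r <= 1/2) by (apply Rabs_le; unfold r; lra).
  replace (PI * y) with (PI * r + IZR (up (y - 1/2)) * PI) by (unfold r; ring).
  rewrite Rabs_cos_add_IZR_PI.
  assert (Hpr : 0 <= PI * Rabs r <= PI / 2).
  { pose proof (Rabs_pos r). split; [nra|].
    apply Rle_trans with (PI * (1/2)); [apply Rmult_le_compat_l; lra | lra]. }
  assert (Habs : Rabs (cos (PI * r)) = cos (PI * Rabs r)).
  { assert (Hsym : cos (PI * r) = cos (PI * Rabs r)).
    { destruct (Rle_dec 0 r).
      - rewrite Rabs_right by lra. reflexivity.
      - rewrite Rabs_left by lra. rewrite <- cos_neg. f_equal. ring. }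
    rewrite Hsym. apply Rabs_right, Rle_ge, cos_ge_0; lra. }
  rewrite Habs. apply cos_decr_1; [nra | nra | lra | lra | apply Rmult_le_compat_l; lra].
Qed.

Lemma cos_PI_le (d : R) : 0 <= d <= 1/2 -> cos (PI * d) <= 1 - d ^ 2.
Proof.
  intros Hd. pose proof PI2_3_2. pose proof PI_4. pose proof PI_RGT_0.
  set (a := PI * d).
  assert (Ha : 0 <= a <= 2) by (unfold a; nra).
  assert (Ha3 : 3 * d <= a) by (unfold a; nra).
  destruct (cos_bound a 0) as [_ Hcos]; [unfold a; nra | unfold a; nra |].
  unfold cos_approx, cos_term in Hcos. simpl in Hcos.
  assert (Hcos4 : cos a <= 1 - a ^ 2 / 2 + a ^ 4 / 24)
    by (eapply Rle_trans; [exact Hcos | right; field]).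
  assert (a ^ 4 <= 4 * a ^ 2) by (assert (a ^ 2 <= 4) by nra; nra).
  assert (9 * d ^ 2 <= a ^ 2) by nra.
  nra.
Qed.

(* [rising n k = n (n+1) ... (n+k)] has [k+1] factors. *)
Fixpoint rising (n k : nat) : nat :=
  match k with
  | O => n
  | S k' => (rising n k' * (n + S k'))%nat
  end.

Lemma rising_succ_mul (n k : nat) : (rising (S n) k * n = rising n k * (n + S k))%nat.
Proof. induction k as [|k IH]; simpl; [lia|]. nia. Qed.

Lemma rising_pos (n k : nat) : (1 <= n)%nat -> (1 <= rising n k)%nat.
Proof. intros Hn. induction k; simpl; nia. Qed.

Lemma pow_le_rising (n k : nat) : (n ^ S k <= rising n k)%nat.
Proof.
  induction k as [|k IH]; simpl in *; [lia|].
  replace (n * (n * n ^ k))%nat with (n * n ^ k * n)%nat by ring. nia.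
Qed.

Lemma rising_le_pow (n k : nat) : (rising n k <= (n + k) ^ S k)%nat.
Proof.
  induction k as [|k IH]; simpl in *; [lia|].
  assert ((n + k) ^ S k <= (n + S k) ^ S k)%nat by (apply Nat.pow_le_mono_l; lia).
  simpl in *. nia.
Qed.

Lemma rising_mono (n n' k : nat) : (n <= n')%nat -> (rising n k <= rising n' k)%nat.
Proof. intros Hn. induction k; simpl; nia. Qed.

(* [rising n k / n ^ (k+1) = prod_(i <= k) (1 + i/n)] decreases in [n]. *)
Lemma rising_mul_pow_le (m t k : nat) :
  (rising (m + t) k * m ^ S k <= (m + t) ^ S k * rising m k)%nat.
Proof.
  induction k as [|k IH]; simpl in *; [nia|].
  set (A := rising (m + t) k) in *. set (B := rising m k) in *.
  set (u := (m ^ k)%nat) in *. set (v := ((m + t) ^ k)%nat) in *.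
  assert (Hstep : ((m + t + S k) * m <= (m + t) * (m + S k))%nat) by nia.
  replace (A * (m + t + S k) * (m * (m * u)))%nat
    with ((A * (m * u)) * ((m + t + S k) * m))%nat by ring.
  replace ((m + t) * ((m + t) * v) * (B * (m + S k)))%nat
    with (((m + t) * v * B) * ((m + t) * (m + S k)))%nat by ring.
  apply Nat.mul_le_mono; assumption.
Qed.

Lemma rising_le_3 (m n k : nat) :
  (1 <= m <= n)%nat -> ((n - m) * S k <= m)%nat -> INR (rising n k) <= 3 * INR (rising m k).
Proof.
  intros Hmn Hgap.
  pose proof (rising_mul_pow_le m (n - m) k) as Hr.
  replace (m + (n - m))%nat with n in Hr by lia.
  apply le_INR in Hr. rewrite !mult_INR, !pow_INR in Hr.
  assert (Hm : 0 < INR m) by (apply lt_0_INR; lia).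
  assert (Hpow : INR n ^ S k <= 3 * INR m ^ S k).
  { replace (INR n) with (INR m + INR (n - m)) by (rewrite <- plus_INR; f_equal; lia).
    apply pow_add_le_3; [exact Hm | apply pos_INR |].
    rewrite <- mult_INR. apply le_INR, Hgap. }
  pose proof (pow_lt (INR m) (S k) Hm). pose proof (pos_INR (rising m k)).
  pose proof (pos_INR (rising n k)). nra.
Qed.

Fixpoint fdiff (g : nat -> R) (k n : nat) : R :=
  match k with
  | O => g n
  | S k' => fdiff g k' (S n) - fdiff g k' n
  end.

Lemma near_int_fdiff (g : nat -> R) (k n : nat) (d : R) :
  (forall i, (i <= k)%nat -> near_int (g (n + i)%nat) d) -> near_int (fdiff g k n) (2 ^ k * d).
Proof.
  revert n; induction k as [|k IH]; intros n Hnear.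
  - simpl. rewrite Rmult_1_l. specialize (Hnear O (le_n _)).
    rewrite Nat.add_0_r in Hnear. exact Hnear.
  - destruct (IH (S n)) as [z1 Hz1].
    { intros i Hi. replace (S n + i)%nat with (n + S i)%nat by lia. apply Hnear. lia. }
    destruct (IH n) as [z2 Hz2]; [intros i Hi; apply Hnear; lia|].
    exists (z1 - z2)%Z. rewrite minus_IZR. simpl fdiff.
    replace (fdiff g k (S n) - fdiff g k n - (IZR z1 - IZR z2))
      with ((fdiff g k (S n) - IZR z1) - (fdiff g k n - IZR z2)) by ring.
    eapply Rle_trans; [apply Rabs_triang|]. rewrite Rabs_Ropp. simpl. lra.
Qed.

Lemma fdiff_div (x : R) (k n : nat) : (1 <= n)%nat ->
  fdiff (fun j => x / INR j) k n = (-1) ^ k * INR (fact k) * x / INR (rising n k).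
Proof.
  revert n; induction k as [|k IH]; intros n Hn; [simpl; field; apply not_0_INR; lia|].
  simpl fdiff. rewrite !IH by lia.
  pose proof (rising_succ_mul n k) as Hshift. apply (f_equal INR) in Hshift.
  rewrite !mult_INR in Hshift.
  assert (INR (rising (S n) k) <> 0) by (apply not_0_INR; pose proof (rising_pos (S n) k); lia).
  assert (INR (rising n k) <> 0) by (apply not_0_INR; pose proof (rising_pos n k Hn); lia).
  assert (INR n <> 0) by (apply not_0_INR; lia).
  assert (INR (n + S k) <> 0) by (apply not_0_INR; lia).
  replace (INR (rising (S n) k)) with (INR (rising n k) * INR (n + S k) / INR n)
    by (rewrite <- Hshift; field; auto).
  simpl rising. rewrite mult_INR, fact_simpl, mult_INR, plus_INR, S_INR in *. simpl pow.
  field. repeat split; auto.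
Qed.

Lemma not_near_int_mid (y : R) : 1/4 < Rabs y <= 3/4 -> ~ near_int y (1/8).
Proof.
  intros Hy [z Hz].
  assert (Hz3 : IZR z <= -1 \/ z = 0%Z \/ 1 <= IZR z).
  { destruct (Z.le_gt_cases z (-1)) as [H|H]; [left; apply IZR_le, H|].
    destruct (Z.eq_dec z 0) as [H0|H0]; [right; left; exact H0 | right; right; apply IZR_le; lia]. }
  destruct Hz3 as [H | [-> | H]]; revert Hy Hz; unfold Rabs; repeat destruct Rcase_abs; intros; lra.
Qed.

Lemma inv_8_pow2_bounds (k : nat) : 0 < / (8 * 2 ^ k) <= 1/8.
Proof.
  assert (H2k : 1 <= 2 ^ k) by (apply pow_R1_Rle; lra).
  split; [apply Rinv_0_lt_compat; lra|].
  apply Rle_trans with (/ 8); [apply Rinv_le_contravar; lra | lra].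
Qed.

Lemma block_has_small_cos (x : R) (k n : nat) : (1 <= n)%nat ->
  INR (rising n k) < 4 * (INR (fact k) * x) -> 4 * (INR (fact k) * x) <= 3 * INR (rising n k) ->
  exists i, (i <= k)%nat /\ Rabs (cos (PI * x / INR (n + i))) <= 1 - (/ (8 * 2 ^ k)) ^ 2.
Proof.
  intros Hn Hlo Hhi. pose proof (inv_8_pow2_bounds k) as Hd. set (d := / (8 * 2 ^ k)) in *.
  destruct (classic (forall i, (i <= k)%nat -> near_int (x / INR (n + i)) d)) as [Hall | Hsome].
  - exfalso. apply (not_near_int_mid (fdiff (fun j => x / INR j) k n)).
    + assert (Hr : 0 < INR (rising n k)) by (apply lt_0_INR; pose proof (rising_pos n k Hn); lia).
      assert (HG : 1/4 < INR (fact k) * x / INR (rising n k) <= 3/4).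
      { assert (HGP : INR (fact k) * x / INR (rising n k) * INR (rising n k) = INR (fact k) * x)
          by (field; lra).
        set (G := INR (fact k) * x / INR (rising n k)) in *. split; nra. }
      rewrite fdiff_div by exact Hn.
      replace ((-1) ^ k * INR (fact k) * x / INR (rising n k))
        with ((-1) ^ k * (INR (fact k) * x / INR (rising n k))) by (unfold Rdiv; ring).
      rewrite Rabs_mult, pow_1_abs, Rmult_1_l, Rabs_right by lra. exact HG.
    + replace (1/8) with (2 ^ k * d) by (unfold d; field; apply pow_nonzero; lra).
      apply near_int_fdiff, Hall.
  - apply not_all_ex_not in Hsome. destruct Hsome as [i Hi].
    apply imply_to_and in Hi. destruct Hi as [Hik Hfar].
    exists i. split; [exact Hik|].
    replace (PI * x / INR (n + i)) with (PI * (x / INR (n + i))) by (unfold Rdiv; ring).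
    eapply Rle_trans; [apply (Rabs_cos_PI_le_of_not_near _ d); [lra | exact Hfar]|].
    apply cos_PI_le. lra.
Qed.

Lemma varrho_lt_of_window (N k m J : nat) (x : R) :
  (1 <= m)%nat ->
  3/4 * INR (rising m k) < INR (fact k) * x ->
  INR (fact k) * x <= 3/4 * INR (rising (S m) k) ->
  (J * S k * S k <= m)%nat -> (m + J * S k <= N)%nat ->
  128 * 4 ^ k * ln x < INR J ->
  Rabs (varrho N x) < 1 / x ^ 2.
Proof.
  intros Hm Hlo Hhi HJm HJN Hbig.
  pose proof (inv_8_pow2_bounds k) as Hd. set (d := / (8 * 2 ^ k)) in *. set (c := 1 - d ^ 2).
  set (f := fun n => cos (PI * x / INR n)).
  assert (Hx : 0 < x).
  { pose proof (lt_0_INR _ (lt_O_fact k)). pose proof (pos_INR (rising m k)). nra. }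
  assert (Hblocks : forall j, (j < J)%nat ->
    exists i, (i < S k)%nat /\ Rabs (f (m + j * S k + 1 + i)%nat) <= c).
  { intros j Hj. set (n := (m + j * S k + 1)%nat).
    assert (Hgap : ((n - m) * S k <= m)%nat).
    { assert (n - m <= J * S k)%nat by (unfold n; nia). nia. }
    pose proof (rising_le_3 m n k ltac:(unfold n; lia) Hgap).
    assert (INR (rising (S m) k) <= INR (rising n k)) by (apply le_INR, rising_mono; unfold n; lia).
    destruct (block_has_small_cos x k n) as [i [Hi Hc]]; [unfold n; lia | lra | lra |].
    exists i. split; [lia | exact Hc]. }
  assert (Hcount : (J <= count_small f c N)%nat).
  { eapply Nat.le_trans; [apply (count_small_blocks f c m (S k) J Hblocks)|].
    apply count_small_mono, HJN. }
  assert (Hd2 : d ^ 2 * (64 * 4 ^ k) = 1).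
  { replace (4 ^ k) with (2 ^ k * 2 ^ k) by (rewrite <- Rpow_mult_distr; f_equal; ring).
    unfold d. field. apply pow_nonzero. lra. }
  assert (H4k : 0 < 4 ^ k) by (apply pow_lt; lra).
  assert (Hc : 0 <= c <= 1) by (unfold c; split; nra).
  assert (Hce : c <= exp (- d ^ 2)) by (pose proof (exp_ineq1_le (- d ^ 2)); unfold c; lra).
  change (varrho N x) with (prod_1_to N f).
  apply Rle_lt_trans with (c ^ J).
  { eapply Rle_trans; [apply Rabs_prod_1_to_le; [exact Hc | intro n; apply Rabs_le, COS_bound]|].
    apply pow_le_pow_of_le_one; assumption. }
  apply Rle_lt_trans with (exp (- d ^ 2) ^ J); [apply pow_incr; lra|].
  replace (1 / x ^ 2) with (exp (- (INR 2 * ln x)))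
    by (rewrite exp_Ropp, <- exp_pow, exp_ln by exact Hx; field; lra).
  rewrite exp_pow. apply exp_increasing. simpl INR.
  assert (2 * ln x < INR J * d ^ 2).
  { replace (2 * ln x) with (128 * 4 ^ k * ln x * d ^ 2)
      by (transitivity (2 * ln x * (d ^ 2 * (64 * 4 ^ k))); [ring | rewrite Hd2; ring]).
    apply Rmult_lt_compat_r; [nra | exact Hbig]. }
  lra.
Qed.

Lemma exists_window_degree (s N2 K : nat) (x : R) :
  (K <= s)%nat -> (s * s <= N2)%nat -> (2 <= N2)%nat -> INR N2 <= x -> x <= INR s ^ K ->
  exists k, (k < K)%nat /\ 3/4 * INR (rising N2 k) < INR (fact k) * x /\
    INR (fact (S k)) * x <= 3/4 * INR (rising N2 (S k)).
Proof.
  intros HKs Hs HN2 HxN2 HxK.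
  destruct (discrete_ivt (fun k => INR (fact k) * x <= 3/4 * INR (rising N2 k)) 0 K)
    as [k [Hk [Hfail Hok]]]; [lia | | |].
  - simpl. assert (0 < INR N2) by (apply lt_0_INR; lia). lra.
  - assert (Hss : (s ^ K * s ^ K <= N2 ^ K)%nat)
      by (rewrite <- Nat.pow_mul_l; apply Nat.pow_le_mono_l, Hs).
    assert (Hfs : (fact K <= s ^ K)%nat)
      by (apply (Nat.le_trans _ _ _ (fact_le_pow K)), Nat.pow_le_mono_l, HKs).
    assert (Hrise : (2 * N2 ^ K <= rising N2 K)%nat).
    { eapply Nat.le_trans; [|apply pow_le_rising]. simpl. nia. }
    apply le_INR in Hss, Hfs, Hrise. rewrite !mult_INR, !pow_INR in *.
    pose proof (pos_INR (fact K)). pose proof (pow_le (INR s) K (pos_INR s)).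
    assert (INR (fact K) * x <= INR (fact K) * INR s ^ K) by (apply Rmult_le_compat_l; lra).
    assert (INR (fact K) * INR s ^ K <= INR s ^ K * INR s ^ K) by (apply Rmult_le_compat_r; lra).
    pose proof (pow_le (INR N2) K (pos_INR N2)). simpl in Hrise. lra.
  - exists k. split; [lia|]. split; [apply Rnot_le_lt, Hfail | exact Hok].
Qed.

(* The first inequality (minimality of [S k]) is what keeps the window start [m] above
   [s - S k]. *)
Lemma exists_window_start (s N2 k : nat) (x : R) :
  (S k <= s)%nat -> (s * s <= N2)%nat ->
  3/4 * INR (rising N2 k) < INR (fact k) * x ->
  INR (fact (S k)) * x <= 3/4 * INR (rising N2 (S k)) ->
  exists m, (s - S k <= m < N2)%nat /\ 3/4 * INR (rising m (S k)) < INR (fact (S k)) * x /\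
    INR (fact (S k)) * x <= 3/4 * INR (rising (S m) (S k)).
Proof.
  intros Hks Hs Hlo Hhi.
  destruct (discrete_ivt (fun n => INR (fact (S k)) * x <= 3/4 * INR (rising n (S k))) (s - S k) N2)
    as [m [Hm [Hfail Hok]]]; [nia | | exact Hhi |].
  - intro Hq. cbv beta in Hq.
    assert (Hr : (rising (s - S k) (S k) <= rising N2 k)%nat).
    { eapply Nat.le_trans; [apply rising_le_pow|]. replace (s - S k + S k)%nat with s by lia.
      eapply Nat.le_trans; [apply (Nat.pow_le_mono_r s (S (S k)) (S k + S k)); lia|].
      rewrite Nat.pow_add_r, <- Nat.pow_mul_l.
      eapply Nat.le_trans; [apply Nat.pow_le_mono_l, Hs | apply pow_le_rising]. }
    apply le_INR in Hr.
    assert (Hfact : INR (fact k) <= INR (fact (S k))) by (apply le_INR, fact_le; lia).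
    pose proof (lt_0_INR _ (lt_O_fact k)). pose proof (pos_INR (rising N2 k)).
    assert (Hx : 0 < x) by nra.
    assert (INR (fact k) * x <= INR (fact (S k)) * x) by (apply Rmult_le_compat_r; lra).
    lra.
  - exists m. split; [lia|]. split; [apply Rnot_le_lt, Hfail | exact Hok].
Qed.

Lemma pow4_mul_exp_lt (t : R) : 1000000 <= t -> 100 * t ^ 4 * exp (t / 32) < exp t.
Proof.
  intros Ht.
  assert (H8 : t / 8 <= exp (t / 8)) by (pose proof (exp_ineq1_le (t / 8)); lra).
  assert (H4 : (t / 8) ^ 4 <= exp (t / 8) ^ 4) by (apply pow_incr; lra).
  rewrite exp_pow in H4.
  assert (Hmid : 1 + 15 * t / 32 <= exp (15 * t / 32)) by apply exp_ineq1_le.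
  assert (Hsplit : exp t = exp (INR 4 * (t / 8)) * exp (15 * t / 32) * exp (t / 32)).
  { rewrite <- !exp_plus. f_equal. simpl. field. }
  rewrite Hsplit.
  pose proof (exp_pos (t / 32)). pose proof (pow_le (t / 8) 4 ltac:(lra)).
  apply Rmult_lt_compat_r; [assumption|].
  replace (100 * t ^ 4) with ((t / 8) ^ 4 * 409600) by (field; lra).
  apply Rlt_le_trans with ((t / 8) ^ 4 * exp (15 * t / 32)).
  - apply Rmult_lt_compat_l; [|lra]. apply pow_lt. lra.
  - apply Rmult_le_compat_r; [pose proof (exp_pos (15 * t / 32)); lra | exact H4].
Qed.

Lemma four_pow_le (k : nat) (t : R) : INR k <= 1 + t / 64 -> 4 ^ k <= 9 * exp (t / 32).
Proof.
  intros Hk.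
  assert (H2 : 2 <= exp 1) by (pose proof (exp_ineq1_le 1); lra).
  assert (He2 : 4 <= exp 2).
  { replace (exp 2) with (exp 1 * exp 1) by (rewrite <- exp_plus; f_equal; ring). nra. }
  assert (He9 : exp 2 <= 9).
  { replace (exp 2) with (exp 1 * exp 1) by (rewrite <- exp_plus; f_equal; ring).
    pose proof exp_le_3. pose proof (exp_pos 1). nra. }
  apply Rle_trans with (exp 2 ^ k); [apply pow_incr; lra|].
  rewrite exp_pow. apply Rle_trans with (exp (2 + t / 32)).
  - apply exp_le_mono. lra.
  - rewrite exp_plus. pose proof (exp_pos (t / 32)). nra.
Qed.

Lemma block_count_large (t lx : R) (k m : nat) :
  1000000 <= t -> INR k <= 1 + t / 64 -> exp t <= INR m + INR k -> lx <= t ^ 2 / 64 ->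
  128 * 4 ^ k * lx < INR (m / (S k * S k)).
Proof.
  intros Ht Hk Hm Hlx.
  set (E := exp (t / 32)). set (J := (m / (S k * S k))%nat).
  assert (HE : 1 <= E) by (unfold E; pose proof (exp_ineq1_le (t / 32)); lra).
  pose proof (four_pow_le k t Hk) as H4k. fold E in H4k.
  pose proof (pow4_mul_exp_lt t Ht) as Hexp. fold E in Hexp.
  pose proof (INR_lt_div_succ m (S k * S k) ltac:(lia)) as HJ. fold J in HJ.
  rewrite mult_INR, S_INR in HJ.
  assert (Hq : (INR k + 1) * (INR k + 1) <= t ^ 2).
  { pose proof (pos_INR k). simpl. apply Rmult_le_compat; lra. }
  assert (Hbig : 18 * E * t ^ 2 < INR J).
  { apply Rnot_le_lt. intro HJsmall.
    assert ((INR k + 1) * (INR k + 1) * (INR J + 1) <= t ^ 2 * (18 * E * t ^ 2 + 1))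
      by (pose proof (pos_INR k); pose proof (pos_INR J);
          apply Rmult_le_compat; [nra | lra | exact Hq | lra]).
    assert (Ht2 : t <= t ^ 2) by nra.
    assert (Ht4 : t ^ 2 <= t ^ 4) by (replace (t ^ 4) with (t ^ 2 * t ^ 2) by ring; nra).
    assert (t ^ 4 <= E * t ^ 4) by nra.
    lra. }
  assert (H4 : 0 < 4 ^ k) by (apply pow_lt; lra).
  apply Rle_lt_trans with (128 * 4 ^ k * (t ^ 2 / 64)); [apply Rmult_le_compat_l; lra|].
  assert (4 ^ k * t ^ 2 <= 9 * E * t ^ 2) by (apply Rmult_le_compat_r; [nra | exact H4k]).
  lra.
Qed.

Lemma varrho_lt_core (N N2 s : nat) (x : R) :
  (s * s <= N2)%nat -> (2 * N2 <= N)%nat -> exp 1000000 <= INR s ->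
  INR N <= x -> ln x <= ln (INR s) ^ 2 / 64 ->
  Rabs (varrho N x) < 1 / x ^ 2.
Proof.
  intros Hs HN Hsbig HxN Hlx.
  pose proof (exp_ineq1_le 1000000) as Hexp.
  assert (Hst : INR s = exp (ln (INR s))) by (rewrite exp_ln; lra).
  set (t := ln (INR s)) in *.
  assert (Ht : 1000000 <= t)
    by (rewrite <- (ln_exp 1000000); apply ln_le_mono; [apply exp_pos | exact Hsbig]).
  assert (Hs2 : (2 <= s)%nat) by (apply INR_le; simpl; lra).
  assert (HN2 : INR N2 <= x) by (apply Rle_trans with (INR N); [apply le_INR; lia | exact HxN]).
  assert (Hx : 1 < x) by (apply Rlt_le_trans with (INR N2); [apply (lt_INR 1); nia | exact HN2]).
  assert (Hlx0 : 0 < ln x) by (rewrite <- ln_1; apply ln_increasing; lra).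
  destruct (exists_nat_between (ln x / t)) as [K [HK1 HK2]].
  { apply Rlt_le, Rdiv_lt_0_compat; lra. }
  assert (HxK : x <= INR s ^ K).
  { rewrite Hst, exp_pow, <- (exp_ln x) by lra. apply exp_le_mono.
    apply Rlt_le, (Rmult_lt_reg_r (/ t)); [apply Rinv_0_lt_compat; lra|].
    rewrite Rmult_assoc, Rinv_r, Rmult_1_r by lra. exact HK1. }
  assert (HKt : INR K <= 1 + t / 64).
  { assert (ln x / t <= t / 64).
    { apply (Rmult_le_reg_r t); [lra|]. unfold Rdiv. rewrite Rmult_assoc, Rinv_l by lra. nra. }
    lra. }
  assert (HKs : (K + 1 <= s)%nat)
    by (pose proof (exp_ineq1_le t); apply INR_le; rewrite plus_INR; simpl; lra).
  destruct (exists_window_degree s N2 K x) as [k [HkK [Hlo Hhi]]];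
    [lia | exact Hs | nia | exact HN2 | exact HxK |].
  destruct (exists_window_start s N2 k x) as [m [Hm [Hmlo Hmhi]]];
    [lia | exact Hs | exact Hlo | exact Hhi |].
  pose proof (Nat.Div0.mul_div_le m (S (S k) * S (S k))) as HJ.
  apply (varrho_lt_of_window N (S k) m (m / (S (S k) * S (S k))) x);
    [lia | exact Hmlo | exact Hmhi | nia | nia |].
  apply (block_count_large t); [exact Ht | | | exact Hlx].
  - apply Rle_trans with (INR K); [apply le_INR; lia | exact HKt].
  - rewrite <- Hst, <- plus_INR. apply le_INR. lia.
Qed.

Lemma exists_sqrt_half (M N : nat) : (4 <= M)%nat -> (2 * M * M <= N)%nat ->
  exists N2 s, (s * s <= N2)%nat /\ (2 * N2 <= N)%nat /\ (M <= s)%nat /\ (N <= s * s * s)%nat.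
Proof.
  intros HM HN. exists (N / 2)%nat, (Nat.sqrt (N / 2)).
  pose proof (Nat.div_mod N 2 ltac:(lia)). pose proof (Nat.mod_upper_bound N 2 ltac:(lia)).
  destruct (Nat.sqrt_spec (N / 2) ltac:(lia)) as [Hs1 Hs2].
  assert (HMs : (M <= Nat.sqrt (N / 2))%nat).
  { rewrite <- (Nat.sqrt_square M). apply Nat.sqrt_le_mono. nia. }
  repeat split; nia.
Qed.

Theorem proposition3p2 :
  exists C' : R, 0 < C' /\
    exists N0 : nat, forall N : nat, (N0 <= N)%nat ->
      forall x : R, INR N <= x -> x <= exp (C' * (ln (INR N))^2) ->
        Rabs (varrho N x) < 1 / x ^ 2.
Proof.
  exists (1/576). split; [lra|].
  destruct (exists_nat_between (exp 1000000)) as [M [HM _]]; [left; apply exp_pos|].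
  exists (2 * (M + 4) * (M + 4))%nat. intros N HN x HxN Hxe.
  destruct (exists_sqrt_half (M + 4) N) as [N2 [s [Hs [HN2 [HMs HNs]]]]]; [lia | exact HN |].
  apply (varrho_lt_core N N2 s x Hs HN2); [| exact HxN |].
  { apply Rle_trans with (INR M); [lra | apply le_INR; lia]. }
  assert (Hs0 : 0 < INR s) by (apply lt_0_INR; lia).
  assert (HN0 : 1 <= INR N) by (apply (le_INR 1); nia).
  assert (HlnN : 0 <= ln (INR N) <= 3 * ln (INR s)).
  { split; [rewrite <- ln_1; apply ln_le_mono; lra|].
    replace (3 * ln (INR s)) with (ln (INR s ^ 3)) by (rewrite ln_pow by exact Hs0; simpl; ring).
    apply ln_le_mono; [lra|].
    rewrite <- pow_INR. apply le_INR. simpl. lia. }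
  assert (Hlx : ln x <= 1/576 * ln (INR N) ^ 2).
  { rewrite <- (ln_exp (1/576 * ln (INR N) ^ 2)). apply ln_le_mono; [lra | exact Hxe]. }
  nra.
Qed.
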